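(* Let $\gamma\in(0,1)$ and, for each $N$, let $\omega$ have law $\mathbb{P}^{(N)}$ as in the context. Then for all $\beta\ge0$ and $h\in\mathbb{R}$, $$\mathbb{E}^{(N)}\Big[\frac1N\log Z_{N,\beta,h,\omega}\Big]\xrightarrow[N\to\infty]{}F(\beta,h):=\begin{cases}0 & \text{if } h\le-\beta,\\ \frac{F(h+\beta)}{2} & \text{if } -\beta<h<\beta,\\ \frac{F(h+\beta)+F(h-\beta)}{2} & \text{if } h\ge\beta.\end{cases}$$
   Context: Let $\tau=(\tau_n)_{n\ge0}$ be a renewal process with $\tau_0=0$ and interarrival law $K(n)=L(n)n^{-(1+\alpha)}$, $n\ge1$, where $\alpha\ge0$, $L:\mathbb{N}\to(0,\infty)$ is slowly varying and $\sum_nK(n)=1$; $\delta_n=\mathbf 1_{\{n\in\tau\}}$, $E$ denotes expectation over $\tau$. For $\omega$ independent of $\tau$, $Z_{N,\beta,h,\omega}=E\big[\exp\big(\sum_{n=1}^N(\beta\omega_n+h)\delta_n\big)\delta_N\big]$. The homogeneous free energy is $F(h):=\lim_{N\to\infty}\frac1N\log E\big[\exp\big(h\sum_{n=1}^N\delta_n\big)\delta_N\big]$ (which exists, is $\ge0$, and vanishes iff $h\le0$). $\mathbb{P}^{(N)}$ is the law of the stationary Markov chain $\omega=(\omega_n)_{n\ge0}$ on $\{-1,+1\}$ with transition matrix $Q^{(N)}=\begin{pmatrix}1-N^{-\gamma}&N^{-\gamma}\\N^{-\gamma}&1-N^{-\gamma}\end{pmatrix}$ and initial distribution $(1/2,1/2)$;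 $\mathbb{E}^{(N)}$ is the corresponding expectation. *)

From Stdlib Require Import Reals Lra List.
Import ListNotations.
Open Scope R_scope.

Definition sumR {A : Type} (f : A -> R) (l : list A) : R :=
  fold_right (fun a s => f a + s) 0 l.

Fixpoint bool_lists (n : nat) : list (list bool) :=
  match n with
  | O => [nil]
  | S m => map (cons true) (bool_lists m) ++ map (cons false) (bool_lists m)
  end.

Definition Kren (alpha : R) (L : nat -> R) (n : nat) : R :=
  match n with
  | O => 0
  | S _ => L n * Rpower (INR n) (- (1 + alpha))
  end.

Definition slowly_varying (L : nat -> R) : Prop :=
  forall c : R, 0 < c ->
    Un_cv (fun n => L (Z.to_nat (Int_part (c * INR n))) / L n) 1.

(** A renewal configuration on {1,...,N} is a list d = [d_1; ...; d_N] of
    booleans (d_n = true iff n is a renewal point).  [cfg_weight K 0 d] is the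
    product of K over the successive gaps between renewal points (starting
    from tau_0 = 0); when d_N = true it is exactly P(delta_1..delta_N = d). *)
Fixpoint cfg_weight (K : nat -> R) (gap : nat) (d : list bool) : R :=
  match d with
  | nil => 1
  | b :: d' => if b then K (S gap) * cfg_weight K O d'
               else cfg_weight K (S gap) d'
  end.

Definition ind (b : bool) : R := if b then 1 else 0.

(** delta_n as a function of the configuration (delta_0 = 1 since tau_0 = 0). *)
Definition delta (d : list bool) (n : nat) : R :=
  match n with
  | O => 1
  | S m => ind (nth m d false)
  end.

Definition renewal_E_dN (K : nat -> R) (N : nat) (G : (nat -> R) -> R) : R :=
  sumR (fun d => cfg_weight K O d * G (delta d) * delta d N) (bool_lists N).

Definition Zpf (K : nat -> R) (beta h : R) (omega : nat -> R) (N : nat) : R :=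
  renewal_E_dN K N
    (fun dl => exp (sumR (fun n => (beta * omega n + h) * dl n) (seq 1 N))).

Definition Zhom (K : nat -> R) (h : R) (N : nat) : R :=
  renewal_E_dN K N (fun dl => exp (h * sumR dl (seq 1 N))).

Definition spin (b : bool) : R := if b then 1 else -1.

Definition flip_prob (gamma : R) (N : nat) : R := Rpower (INR N) (- gamma).

Definition Qtrans (p : R) (a b : bool) : R := if Bool.eqb a b then 1 - p else p.

Fixpoint path_weight (p : R) (b0 : bool) (l : list bool) : R :=
  match l with
  | nil => 1
  | b :: l' => Qtrans p b0 b * path_weight p b l'
  end.

Definition omega_of (b0 : bool) (l : list bool) (n : nat) : R :=
  spin (nth n (b0 :: l) false).

(** E^{(N)}[ G(omega) ] for G depending on omega_0, ..., omega_N only: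
    stationary chain, initial law (1/2,1/2), transition matrix Q^{(N)}. *)
Definition MC_E (gamma : R) (N : nat) (G : (nat -> R) -> R) : R :=
  sumR (fun b0 =>
    sumR (fun l => / 2 * path_weight (flip_prob gamma N) b0 l * G (omega_of b0 l))
         (bool_lists N))
    [true; false].

Definition F_beta_h (Fh : R -> R) (beta h : R) : R :=
  if Rle_dec h (- beta) then 0
  else if Rlt_dec h beta then Fh (h + beta) / 2
  else (Fh (h + beta) + Fh (h - beta)) / 2.

From Stdlib Require Import Reals Lra Lia List ZArith.
Import ListNotations.
Open Scope R_scope.

(* Write Z_N as a pinned renewal sum.  The pinned homogeneous
   partition function is super-multiplicative, so Z_N(x) <= exp (N F(x)) and
   ln Z_N(x) >= N (F(x) - eps) - E_eps.  Cut {1,...,N} into the maximal runs on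
   which omega is constant; on a run the field is the constant h + beta or
   h - beta.  Concatenating runs gives a lower bound losing E_eps per run, and
   decomposing at the last renewal inside each run gives an upper bound losing
   O(log N) per run.  Hence
     (1/N) ln Z_N = (1/N) sum_n F(beta omega_n + h) + O((1 + #switches) log N / N).
   Under P^(N) every omega_n is uniform on {-1,+1} and the expected number of
   switches is N^(1-gamma), so the error is O(N^-gamma log N) and the mean
   tends to (F(h+beta) + F(h-beta)) / 2.  This is F(beta,h) because F vanishes
   on (-oo,0]: there Z_N <= 1, while F >= 0 everywhere since a slowly varying
   L makes K decay subexponentially. *)

Lemma sumR_app {A} (f : A -> R) l1 l2 : sumR f (l1 ++ l2) = sumR f l1 + sumR f l2.
Proof. induction l1; simpl; [lra | rewrite IHl1; lra]. Qed.

Lemma sumR_map {A B} (f : B -> R) (g : A -> B) l :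
  sumR f (map g l) = sumR (fun x => f (g x)) l.
Proof. induction l; simpl; [lra | rewrite IHl; lra]. Qed.

Lemma sumR_ext_in {A} (f g : A -> R) l :
  (forall x, In x l -> f x = g x) -> sumR f l = sumR g l.
Proof. induction l; simpl; intros H; [lra | rewrite H, IHl; auto]. Qed.

Lemma sumR_ext {A} (f g : A -> R) l : (forall x, f x = g x) -> sumR f l = sumR g l.
Proof. intros; apply sumR_ext_in; auto. Qed.

Lemma sumR_le {A} (f g : A -> R) l :
  (forall x, In x l -> f x <= g x) -> sumR f l <= sumR g l.
Proof.
  induction l; simpl; intros H; [lra|].
  assert (f a <= g a) by auto. assert (sumR f l <= sumR g l) by auto. lra.
Qed.

Lemma sumR_plus {A} (f g : A -> R) l :
  sumR (fun x => f x + g x) l = sumR f l + sumR g l.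
Proof. induction l; simpl; [lra | rewrite IHl; lra]. Qed.

Lemma sumR_scal {A} (c : R) (f : A -> R) l : sumR (fun x => c * f x) l = c * sumR f l.
Proof. induction l; simpl; [lra | rewrite IHl; lra]. Qed.

Lemma sumR_const {A} (c : R) (l : list A) : sumR (fun _ => c) l = INR (length l) * c.
Proof. induction l; simpl length; [simpl; lra|]. rewrite S_INR. simpl. rewrite IHl. ring. Qed.

Lemma sumR_ge0 {A} (f : A -> R) l : (forall x, In x l -> 0 <= f x) -> 0 <= sumR f l.
Proof.
  intros H. replace 0 with (sumR (fun _ : A => 0) l) by (rewrite sumR_const; ring).
  apply sumR_le; auto.
Qed.

Lemma sumR_seq_shift (f : nat -> R) a n :
  sumR f (seq (S a) n) = sumR (fun i => f (S i)) (seq a n).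
Proof. rewrite <- seq_shift, sumR_map. reflexivity. Qed.

Lemma bool_lists_length n d : In d (bool_lists n) -> length d = n.
Proof.
  revert d; induction n; simpl; intros d H.
  - destruct H as [<-|[]]; reflexivity.
  - apply in_app_or in H; destruct H as [H|H]; apply in_map_iff in H;
      destruct H as [d' [<- H']]; simpl; rewrite IHn; auto.
Qed.

Lemma sumR_bool_lists_S n (f : list bool -> R) :
  sumR f (bool_lists (S n)) = sumR (fun d => f (true :: d)) (bool_lists n)
                              + sumR (fun d => f (false :: d)) (bool_lists n).
Proof. simpl. rewrite sumR_app, !sumR_map. reflexivity. Qed.

(** * Pinned partition functions *)

Section Pinned.
Variable K : nat -> R.

(* [Zpin u g k n] is the renewal sum over the sites k+1, ..., k+n with fields
   [u], pinned at k+n, given that the last renewal before k+1 is at k - g. *)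
Fixpoint Zpin (u : nat -> R) (g k n : nat) : R :=
  match n with
  | O => match g with O => 1 | S _ => 0 end
  | S n' => K (S g) * exp (u (S k)) * Zpin u O (S k) n' + Zpin u (S g) (S k) n'
  end.

Fixpoint ends_pinned (g : nat) (d : list bool) : R :=
  match d with
  | nil => match g with O => 1 | S _ => 0 end
  | b :: d' => ends_pinned (if b then O else S g) d'
  end.

Lemma sumR_Zpin n : forall u g k,
  sumR (fun d => cfg_weight K g d
                 * exp (sumR (fun i => u (k + i)%nat * delta d i) (seq 1 n))
                 * ends_pinned g d)
       (bool_lists n) = Zpin u g k n.
Proof.
  induction n; intros u g k.
  - simpl. rewrite exp_0. destruct g; lra.
  - assert (Hshift : forall b d,
      sumR (fun i => u (k + S i)%nat * delta (b :: d) (S i)) (seq 1 n)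
      = sumR (fun i => u (S (k + i)) * delta d i) (seq 1 n)).
    { intros b d. apply sumR_ext_in; intros i Hi. apply in_seq in Hi.
      rewrite Nat.add_succ_r. destruct i; [lia | reflexivity]. }
    rewrite sumR_bool_lists_S. simpl Zpin.
    rewrite <- (IHn u O (S k)), <- (IHn u (S g) (S k)), <- sumR_scal.
    f_equal; apply sumR_ext; intros d; simpl; rewrite sumR_seq_shift, exp_plus, Hshift.
    + rewrite Nat.add_1_r, Rmult_1_r. ring.
    + rewrite Rmult_0_r, exp_0. ring.
Qed.

Lemma ends_pinned_delta d g : d <> nil -> ends_pinned g d = delta d (length d).
Proof.
  revert g; induction d as [|b d IH]; intros g H; [congruence|].
  destruct d as [|b' d'].
  - destruct b; reflexivity.
  - change (ends_pinned g (b :: b' :: d'))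
      with (ends_pinned (if b then O else S g) (b' :: d')).
    rewrite IH by discriminate. reflexivity.
Qed.

Lemma renewal_E_dN_Zpin N u :
  renewal_E_dN K N (fun dl => exp (sumR (fun n => u n * dl n) (seq 1 N))) = Zpin u O O N.
Proof.
  rewrite <- sumR_Zpin. apply sumR_ext_in; intros d Hd. f_equal. destruct N.
  - destruct Hd as [<-|[]]. reflexivity.
  - apply bool_lists_length in Hd. rewrite ends_pinned_delta, Hd; [reflexivity|].
    intros ->; discriminate.
Qed.

Lemma Zpf_Zpin beta h omega N :
  Zpf K beta h omega N = Zpin (fun n => beta * omega n + h) O O N.
Proof. apply renewal_E_dN_Zpin. Qed.

Lemma Zhom_Zpin x N : Zhom K x N = Zpin (fun _ => x) O O N.
Proof.
  unfold Zhom. rewrite <- renewal_E_dN_Zpin. apply sumR_ext; intro d.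
  rewrite sumR_scal. reflexivity.
Qed.
End Pinned.
Lemma exp_le_mono a b : a <= b -> exp a <= exp b.
Proof. intros [H | ->]; [left; apply exp_increasing | ]; lra. Qed.

Lemma ln_le_mono a b : 0 < a -> a <= b -> ln a <= ln b.
Proof. intros Ha [H | ->]; [left; apply ln_increasing | ]; lra. Qed.

Lemma Zpin_ext K n : forall u v g k k',
  (forall i, (1 <= i <= n)%nat -> u (k + i)%nat = v (k' + i)%nat) ->
  Zpin K u g k n = Zpin K v g k' n.
Proof.
  induction n; intros u v g k k' H; simpl; [reflexivity|].
  assert (H' : forall i, (1 <= i <= n)%nat -> u (S k + i)%nat = v (S k' + i)%nat).
  { intros i Hi. rewrite !Nat.add_succ_comm. apply H; lia. }
  rewrite (IHn u v 0%nat (S k) (S k') H'), (IHn u v (S g) (S k) (S k') H').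
  specialize (H 1%nat ltac:(lia)). rewrite !Nat.add_1_r in H. rewrite H. reflexivity.
Qed.

Section PinnedBounds.
Variable K : nat -> R.
Hypothesis K_ge0 : forall n, 0 <= K n.
Hypothesis K_le1 : forall n, K n <= 1.
Hypothesis K1_gt0 : 0 < K 1.

Let Kexp_ge0 g x : 0 <= K g * exp x.
Proof. apply Rmult_le_pos; [auto | left; apply exp_pos]. Qed.

Lemma Zpin_ge0 n : forall u g k, 0 <= Zpin K u g k n.
Proof.
  induction n; intros; simpl; [destruct g; lra|].
  apply Rplus_le_le_0_compat; [apply Rmult_le_pos|]; auto.
Qed.

Lemma Zpin_supermul m : forall n u g k,
  Zpin K u g k m * Zpin K u 0 (k + m) n <= Zpin K u g k (m + n).
Proof.
  induction m; intros n u g k.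
  - simpl. rewrite Nat.add_0_r. destruct g; [lra|]. rewrite Rmult_0_l. apply Zpin_ge0.
  - simpl. rewrite <- Nat.add_succ_comm.
    pose proof (IHm n u 0%nat (S k)). pose proof (IHm n u (S g) (S k)).
    rewrite Rmult_plus_distr_r, Rmult_assoc.
    apply Rplus_le_compat; [apply Rmult_le_compat_l|]; auto.
Qed.

Lemma Zpin_first_step n u k : K 1 * exp (u (S k)) * Zpin K u 0 (S k) n <= Zpin K u 0 k (S n).
Proof. simpl. pose proof (Zpin_ge0 n u 1 (S k)). lra. Qed.

Lemma Zpin_gt0 n : forall u k, 0 < Zpin K u 0 k n.
Proof.
  induction n; intros; [simpl; lra|].
  eapply Rlt_le_trans; [|apply Zpin_first_step].
  apply Rmult_lt_0_compat; [apply Rmult_lt_0_compat; [auto | apply exp_pos] | auto].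
Qed.

Lemma Zpin_single_excursion n : forall u g k,
  K (S g + n) * exp (u (k + S n)%nat) <= Zpin K u g k (S n).
Proof.
  induction n; intros u g k.
  - simpl. rewrite Nat.add_0_r, Nat.add_1_r, Rmult_1_r. lra.
  - change (Zpin K u g k (S (S n)))
      with (K (S g) * exp (u (S k)) * Zpin K u 0 (S k) (S n) + Zpin K u (S g) (S k) (S n)).
    pose proof (IHn u (S g) (S k)) as IH.
    replace (S (S g) + n)%nat with (S g + S n)%nat in IH by lia.
    replace (S k + S n)%nat with (k + S (S n))%nat in IH by lia.
    pose proof (Rmult_le_pos _ _ (Kexp_ge0 (S g) (u (S k))) (Zpin_ge0 (S n) u 0 (S k))).
    lra.
Qed.

(* [Zfree u a n] is [Zpin u _ a n] with the weight of the first excursion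
   replaced by 1, which makes it independent of the gap. *)
Fixpoint Zfree (u : nat -> R) (a n : nat) : R :=
  match n with
  | O => 0
  | S n' => exp (u (S a)) * Zpin K u 0 (S a) n' + Zfree u (S a) n'
  end.

Fixpoint Zcum (u : nat -> R) (g k m : nat) : R :=
  match m with
  | O => 1
  | S m' => Zcum u g k m' + Zpin K u g k m
  end.

Lemma Zcum_S m : forall u g k,
  Zcum u g k (S m) = K (S g) * exp (u (S k)) * Zcum u 0 (S k) m + Zcum u (S g) (S k) m.
Proof.
  induction m; intros; [simpl; lra|].
  change (Zcum u g k (S (S m))) with (Zcum u g k (S m) + Zpin K u g k (S (S m))).
  rewrite IHm. simpl. ring.
Qed.

Lemma Zcum_ge0 m u g k : 0 <= Zcum u g k m.
Proof.
  induction m; simpl; [lra|]. pose proof (Zpin_ge0 (S m) u g k). simpl in H. lra.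
Qed.

Lemma Zfree_ge0 n : forall u a, 0 <= Zfree u a n.
Proof.
  induction n; intros; simpl; [lra|].
  pose proof (exp_pos (u (S a))). pose proof (Zpin_ge0 n u 0 (S a)).
  pose proof (IHn u (S a)). nra.
Qed.

Lemma Zpin_le_Zfree n : forall u g k, Zpin K u g k (S n) <= Zfree u k (S n).
Proof.
  induction n; intros u g k.
  - simpl. rewrite !Rmult_1_r, !Rplus_0_r.
    pose proof (exp_pos (u (S k))). pose proof (K_le1 (S g)). nra.
  - change (Zpin K u g k (S (S n)))
      with (K (S g) * exp (u (S k)) * Zpin K u 0 (S k) (S n) + Zpin K u (S g) (S k) (S n)).
    change (Zfree u k (S (S n)))
      with (exp (u (S k)) * Zpin K u 0 (S k) (S n) + Zfree u (S k) (S n)).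
    pose proof (IHn u (S g) (S k)). pose proof (Zpin_ge0 (S n) u 0 (S k)).
    pose proof (exp_pos (u (S k))). pose proof (K_le1 (S g)).
    assert (0 <= exp (u (S k)) * Zpin K u 0 (S k) (S n)) by nra.
    nra.
Qed.

(* Split at the last renewal in {k+1, ..., k+m}. *)
Lemma Zpin_split_le m : forall n u g k,
  Zpin K u g k (m + S n) <= Zcum u g k m * Zfree u (k + m) (S n).
Proof.
  induction m; intros n u g k.
  - simpl. rewrite Nat.add_0_r, Rmult_1_l. apply Zpin_le_Zfree.
  - rewrite Zcum_S. replace (k + S m)%nat with (S k + m)%nat by lia.
    change (Zpin K u g k (S m + S n)) with (K (S g) * exp (u (S k)) * Zpin K u 0 (S k) (m + S n)
                                            + Zpin K u (S g) (S k) (m + S n)).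
    pose proof (IHm n u 0%nat (S k)). pose proof (IHm n u (S g) (S k)).
    rewrite Rmult_plus_distr_r, (Rmult_assoc (K (S g) * _)).
    apply Rplus_le_compat; [apply Rmult_le_compat_l|]; auto.
Qed.

Lemma Zcum_le m : forall u g k B, 1 <= B ->
  (forall j, (1 <= j <= m)%nat -> Zpin K u g k j <= B) -> Zcum u g k m <= (INR m + 1) * B.
Proof.
  induction m; intros u g k B HB H; [simpl; lra|].
  simpl Zcum. rewrite S_INR.
  specialize (IHm u g k B HB ltac:(intros; apply H; lia)).
  specialize (H (S m) ltac:(lia)). simpl in H. lra.
Qed.

Lemma Zfree_le n : forall u a B C,
  (forall i, exp (u i) <= C) ->
  (forall i, (1 <= i <= n)%nat -> Zpin K u 0 (a + i) (n - i) <= B) ->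
  Zfree u a n <= INR n * C * B.
Proof.
  induction n; intros u a B C HC HB; simpl Zfree; [simpl; lra|].
  rewrite S_INR.
  assert (HB1 : Zpin K u 0 (S a) n <= B).
  { specialize (HB 1%nat ltac:(lia)). rewrite Nat.add_1_r, Nat.sub_1_r in HB. exact HB. }
  assert (Zfree u (S a) n <= INR n * C * B).
  { apply IHn; auto. intros i Hi. rewrite Nat.add_succ_comm.
    replace (n - i)%nat with (S n - S i)%nat by lia. apply HB; lia. }
  pose proof (exp_pos (u (S a))). pose proof (HC (S a)). pose proof (Zpin_ge0 n u 0 (S a)).
  assert (exp (u (S a)) * Zpin K u 0 (S a) n <= C * B) by (apply Rmult_le_compat; lra).
  lra.
Qed.

(* [Ktail g] = P(tau_1 > g). *)
Fixpoint Ktail (g : nat) : R := match g with O => 1 | S g' => Ktail g' - K g end.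

Lemma Zpin_le_Ktail : (forall g, 0 <= Ktail g) ->
  forall n u g k, (forall i, u i <= 0) -> Zpin K u g k n <= Ktail g.
Proof.
  intros HR n. induction n; intros u g k Hu.
  - destruct g; simpl; [lra | apply (HR (S g))].
  - simpl. pose proof (IHn u 0%nat (S k) Hu). pose proof (IHn u (S g) (S k) Hu).
    simpl in *.
    assert (exp (u (S k)) <= 1) by (rewrite <- exp_0; apply exp_le_mono, Hu).
    pose proof (exp_pos (u (S k))). pose proof (K_ge0 (S g)).
    pose proof (Zpin_ge0 n u 0 (S k)).
    assert (exp (u (S k)) * Zpin K u 0 (S k) n <= 1) by nra.
    nra.
Qed.
End PinnedBounds.

(** * The homogeneous free energy *)

Lemma Un_cv_ge_frequently u l c :
  Un_cv u l -> (forall N0, exists n, (N0 <= n)%nat /\ c <= u n) -> c <= l.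
Proof.
  intros Hu Hf. apply Rnot_lt_le; intros Hlt.
  destruct (Hu (c - l)) as [N HN]; [lra|]. destruct (Hf N) as [n [Hn1 Hn2]].
  specialize (HN n Hn1). unfold Rdist in HN. apply Rabs_def2 in HN. lra.
Qed.

Lemma Un_cv_le_frequently u l c :
  Un_cv u l -> (forall N0, exists n, (N0 <= n)%nat /\ u n <= c) -> l <= c.
Proof.
  intros Hu Hf. apply Rnot_lt_le; intros Hlt.
  destruct (Hu (l - c)) as [N HN]; [lra|]. destruct (Hf N) as [n [Hn1 Hn2]].
  specialize (HN n Hn1). unfold Rdist in HN. apply Rabs_def2 in HN. lra.
Qed.

Lemma Zpin_const_shift K x g k n : Zpin K (fun _ => x) g k n = Zpin K (fun _ => x) g 0 n.
Proof. apply Zpin_ext. reflexivity. Qed.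

Section Homogeneous.
Variables (K : nat -> R) (Fh : R -> R).
Hypothesis K_ge0 : forall n, 0 <= K n.
Hypothesis K1_gt0 : 0 < K 1.
Hypothesis HF : forall x, Un_cv (fun N => / INR N * ln (Zpin K (fun _ => x) 0 0 N)) (Fh x).

Local Notation Zh x n := (Zpin K (fun _ => x) 0 0 n).

Let Zh_gt0 x n : 0 < Zh x n.
Proof. apply Zpin_gt0; auto. Qed.

Lemma F_le0 x : (forall g, 0 <= Ktail K g) -> x <= 0 -> Fh x <= 0.
Proof.
  intros HR Hx. apply (Un_cv_le_frequently _ _ 0 (HF x)). intros N0. exists (S N0). split; [lia|].
  assert (Zh x (S N0) <= 1) by (apply (Zpin_le_Ktail K K_ge0 HR); auto).
  assert (ln (Zh x (S N0)) <= 0) by (rewrite <- ln_1; apply ln_le_mono; auto).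
  assert (0 < / INR (S N0)) by (apply Rinv_0_lt_compat, lt_0_INR; lia).
  nra.
Qed.

Lemma Zpin_const_pow x j n : Zh x j ^ n <= Zh x (j * n).
Proof.
  induction n; simpl; [rewrite Nat.mul_0_r; simpl; lra|].
  replace (j * S n)%nat with (j + j * n)%nat by lia.
  eapply Rle_trans; [|apply Zpin_supermul; auto].
  rewrite (Zpin_const_shift K x 0 (0 + j)). apply Rmult_le_compat_l; [left|]; auto.
Qed.

Lemma Zpin_const_le_exp x j : Zh x j <= exp (INR j * Fh x).
Proof.
  destruct j as [|j]; [simpl; rewrite Rmult_0_l, exp_0; lra|].
  assert (Hj : 0 < INR (S j)) by (apply lt_0_INR; lia).
  assert (HFj : / INR (S j) * ln (Zh x (S j)) <= Fh x).
  { apply (Un_cv_ge_frequently _ _ _ (HF x)). intros N0. exists (S j * S N0)%nat.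
    split; [nia|].
    assert (HN : 0 < INR (S N0)) by (apply lt_0_INR; lia).
    pose proof (ln_le_mono _ _ (pow_lt _ (S N0) (Zh_gt0 x (S j))) (Zpin_const_pow x (S j) (S N0))).
    rewrite ln_pow in H by auto. rewrite mult_INR, Rinv_mult.
    replace (/ INR (S j) * ln (Zh x (S j)))
      with (/ INR (S j) * / INR (S N0) * (INR (S N0) * ln (Zh x (S j)))) by (field; lra).
    apply Rmult_le_compat_l; [apply Rmult_le_pos; left; apply Rinv_0_lt_compat|]; lra. }
  rewrite <- (exp_ln (Zh x (S j))) by auto. apply exp_le_mono.
  apply Rmult_le_compat_l with (r := INR (S j)) in HFj; [|lra].
  rewrite <- Rmult_assoc, Rinv_r, Rmult_1_l in HFj by lra. exact HFj.
Qed.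

Lemma ln_Zpin_const_ge_K1 x n : INR n * (ln (K 1) + x) <= ln (Zh x n).
Proof.
  induction n; [simpl; rewrite ln_1; lra|].
  pose proof (Zpin_first_step K K_ge0 n (fun _ => x) 0%nat) as H.
  rewrite (Zpin_const_shift K x 0 1 n) in H.
  apply ln_le_mono in H;
    [|apply Rmult_lt_0_compat; [apply Rmult_lt_0_compat; [|apply exp_pos]|]; auto].
  rewrite !ln_mult, ln_exp in H by (try apply Rmult_lt_0_compat; auto; apply exp_pos).
  rewrite S_INR. lra.
Qed.

Lemma ln_Zpin_const_ge x eps : 0 < eps -> exists E, 0 <= E /\
  forall l, INR l * (Fh x - eps) - E <= ln (Zh x l).
Proof.
  intros He. destruct (HF x eps He) as [N0 HN].
  set (c := Rabs (ln (K 1) + x - (Fh x - eps))).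
  assert (Hc : 0 <= c) by apply Rabs_pos.
  exists (INR N0 * c). split; [apply Rmult_le_pos; [apply pos_INR | auto]|].
  intros l. pose proof (pos_INR N0).
  destruct (Compare_dec.le_lt_dec N0 l) as [Hl|Hl]; [destruct l as [|l]|].
  - simpl. rewrite ln_1. nra.
  - specialize (HN (S l) Hl). unfold Rdist in HN. apply Rabs_def2 in HN.
    assert (Hl0 : 0 < INR (S l)) by (apply lt_0_INR; lia).
    assert (INR (S l) * (Fh x - eps) <= ln (Zh x (S l))).
    { apply Rmult_le_reg_l with (/ INR (S l)); [apply Rinv_0_lt_compat; lra|].
      rewrite <- Rmult_assoc, Rinv_l, Rmult_1_l by lra. lra. }
    nra.
  - pose proof (ln_Zpin_const_ge_K1 x l).
    assert (INR l <= INR N0) by (apply le_INR; lia).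
    pose proof (pos_INR l).
    pose proof (Rle_abs (- (ln (K 1) + x - (Fh x - eps)))). rewrite Rabs_Ropp in H3.
    fold c in H3.
    assert (INR l * (- (ln (K 1) + x - (Fh x - eps))) <= INR N0 * c).
    { apply Rle_trans with (INR l * c); [apply Rmult_le_compat_l | apply Rmult_le_compat_r]; auto. }
    lra.
Qed.
End Homogeneous.

Section Kernel.
Variables (alpha : R) (L : nat -> R).
Hypothesis HL : forall n : nat, (1 <= n)%nat -> 0 < L n.

Lemma Kren_gt0 n : (1 <= n)%nat -> 0 < Kren alpha L n.
Proof.
  intros H. destruct n; [lia|]. unfold Kren, Rpower.
  apply Rmult_lt_0_compat; [apply HL; lia | apply exp_pos].
Qed.

Lemma Kren_ge0 n : 0 <= Kren alpha L n.
Proof. destruct n; [simpl; lra | left; apply Kren_gt0; lia]. Qed.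

Lemma Kren_1 : Kren alpha L 1 = L 1.
Proof. unfold Kren, Rpower. simpl. rewrite ln_1, Rmult_0_r, exp_0. ring. Qed.

Lemma ln_Kren n : (1 <= n)%nat ->
  ln (Kren alpha L n) = ln (L n) - (1 + alpha) * ln (INR n).
Proof.
  intros Hn. destruct n as [|n]; [lia|]. unfold Kren.
  rewrite ln_mult by (try apply HL; try lia; unfold Rpower; apply exp_pos).
  rewrite ln_Rpower. ring.
Qed.

Hypothesis Hsum : infinite_sum (fun n => Kren alpha L (S n)) 1.

Lemma Ktail_Kren g : Ktail (Kren alpha L) (S g) = 1 - sum_f_R0 (fun n => Kren alpha L (S n)) g.
Proof. induction g; simpl in *; [ring | rewrite IHg; ring]. Qed.

Lemma partial_sum_Kren_le1 g : sum_f_R0 (fun n => Kren alpha L (S n)) g <= 1.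
Proof. apply sum_incr; [exact Hsum | intros; apply Kren_ge0]. Qed.

Lemma Ktail_Kren_ge0 g : 0 <= Ktail (Kren alpha L) g.
Proof.
  destruct g; [simpl; lra|]. rewrite Ktail_Kren. pose proof (partial_sum_Kren_le1 g). lra.
Qed.

Lemma Kren_le1 n : Kren alpha L n <= 1.
Proof.
  destruct n; [simpl; lra|].
  assert (Hle1 : forall g, Ktail (Kren alpha L) g <= 1).
  { induction g; cbn [Ktail]; [lra|]. pose proof (Kren_ge0 (S g)). lra. }
  pose proof (Ktail_Kren_ge0 (S n)). pose proof (Hle1 n). cbn [Ktail] in H. lra.
Qed.
End Kernel.

Lemma nat_sq_le_pow2 j : (4 <= j)%nat -> (j * j <= 2 ^ j)%nat.
Proof.
  induction j; intros H; [lia|].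
  destruct (Nat.eq_dec j 3) as [->|Hj]; [simpl; lia|].
  assert (j * j <= 2 ^ j)%nat by (apply IHj; lia). simpl. nia.
Qed.

Lemma pow2_dominates_linear A B eps : 0 < eps ->
  exists j0, forall j, (j0 <= j)%nat -> B * INR j - A <= eps * 2 ^ j.
Proof.
  intros He. destruct (INR_unbounded ((Rabs B + Rabs A) / eps)) as [j1 Hj1].
  exists (Nat.max j1 4). intros j Hj.
  assert (Hsq : INR j * INR j <= 2 ^ j).
  { rewrite <- mult_INR, <- (pow_INR 2). apply le_INR, nat_sq_le_pow2. lia. }
  assert (HjA : Rabs B + Rabs A <= eps * INR j).
  { assert (INR j1 <= INR j) by (apply le_INR; lia).
    apply Rmult_le_reg_r with (/ eps); [apply Rinv_0_lt_compat; lra|].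
    replace (eps * INR j * / eps) with (INR j) by (field; lra). unfold Rdiv in Hj1. lra. }
  assert (Hj1' : 1 <= INR j) by (replace 1 with (INR 1) by reflexivity; apply le_INR; lia).
  pose proof (Rle_abs B). pose proof (Rle_abs (- A)). rewrite Rabs_Ropp in *.
  pose proof (Rabs_pos A). pose proof (Rabs_pos B).
  apply Rle_trans with ((Rabs B + Rabs A) * INR j); [nra|].
  apply Rle_trans with (eps * INR j * INR j); [apply Rmult_le_compat_r; lra | nra].
Qed.

Section NonnegativeFreeEnergy.
Variables (alpha : R) (L : nat -> R).
Hypothesis HL : forall n : nat, (1 <= n)%nat -> 0 < L n.
Hypothesis Hsv : slowly_varying L.

Lemma L_double_ge : exists n1, (1 <= n1)%nat /\ forall n, (n1 <= n)%nat -> L n / 2 <= L (2 * n).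
Proof.
  destruct (Hsv 2 ltac:(lra) (/2) ltac:(lra)) as [N HN].
  exists (Nat.max N 1). split; [lia|]. intros n Hn.
  specialize (HN n ltac:(lia)).
  replace (2 * INR n) with (INR (2 * n)) in HN by (rewrite mult_INR; simpl; ring).
  rewrite Int_part_INR, Nat2Z.id in HN. unfold Rdist in HN. apply Rabs_def2 in HN.
  assert (0 < L n) by (apply HL; lia).
  apply Rmult_le_reg_r with (/ L n); [apply Rinv_0_lt_compat; lra|].
  replace (L n / 2 * / L n) with (/ 2) by (field; lra). unfold Rdiv in HN. lra.
Qed.

Lemma L_pow2_ge : exists M, (1 <= M)%nat /\ forall j, L M <= L (M * 2 ^ j) * 2 ^ j.
Proof.
  destruct L_double_ge as [M [HM Hd]]. exists M. split; [exact HM|].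
  induction j; [simpl; rewrite Nat.mul_1_r; lra|].
  replace (M * 2 ^ S j)%nat with (2 * (M * 2 ^ j))%nat by (simpl; lia).
  assert (M <= M * 2 ^ j)%nat by (pose proof (Nat.pow_nonzero 2 j); nia).
  specialize (Hd _ H). simpl pow.
  assert (0 < 2 ^ j) by (apply pow_lt; lra). nra.
Qed.

(* Along n = M 2^j, ln K(n) >= A - B log2 n: subexponential decay of K. *)
Lemma ln_Kren_pow2_ge : exists M A B, (1 <= M)%nat /\
  forall j, A - B * INR j <= ln (Kren alpha L (M * 2 ^ j)).
Proof.
  destruct L_pow2_ge as [M [HM HP]].
  exists M, (ln (L M) - (1 + alpha) * ln (INR M)), ((2 + alpha) * ln 2).
  split; [exact HM|]. intros j.
  assert (Hn : (1 <= M * 2 ^ j)%nat) by (pose proof (Nat.pow_nonzero 2 j); nia).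
  assert (HMr : 0 < INR M) by (apply lt_0_INR; lia).
  assert (H2j : 0 < 2 ^ j) by (apply pow_lt; lra).
  assert (HLn : 0 < L (M * 2 ^ j)) by (apply HL; lia).
  specialize (HP j). apply ln_le_mono in HP; [|apply HL; lia].
  rewrite ln_mult, ln_pow in HP by (auto; lra).
  rewrite ln_Kren, mult_INR, pow_INR, ln_mult, ln_pow by (auto; simpl; lra).
  replace (INR 2) with 2 by (simpl; ring).
  pose proof (Rlt_le _ _ ln_lt_2). pose proof ln_lt_2. nra.
Qed.

Lemma F_ge0 (Fh : R -> R) :
  (forall x, Un_cv (fun N => / INR N * ln (Zpin (Kren alpha L) (fun _ => x) 0 0 N)) (Fh x)) ->
  forall x, 0 <= Fh x.
Proof.
  intros HF x. apply Rnot_lt_le. intros Hneg.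
  set (eps := - Fh x / 2).
  destruct ln_Kren_pow2_ge as [M [A [B [HM HK]]]].
  destruct (pow2_dominates_linear (A + x) B eps ltac:(unfold eps; lra)) as [j0 Hj0].
  assert (- eps <= Fh x); [|unfold eps in *; lra].
  apply (Un_cv_ge_frequently _ _ _ (HF x)). intros N0.
  set (j := Nat.max N0 j0).
  assert (HjN : (j <= 2 ^ j)%nat) by (apply Nat.lt_le_incl, Nat.pow_gt_lin_r; lia).
  exists (M * 2 ^ j)%nat. split; [nia|].
  specialize (Hj0 j ltac:(lia)). specialize (HK j).
  assert (Hn : (1 <= M * 2 ^ j)%nat) by (pose proof (Nat.pow_nonzero 2 j); nia).
  assert (HnR : INR (M * 2 ^ j) = INR M * 2 ^ j)
    by (rewrite mult_INR, pow_INR; simpl; replace (1 + 1) with 2 by ring; reflexivity).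
  assert (HMr : 1 <= INR M) by (replace 1 with (INR 1) by reflexivity; apply le_INR; lia).
  assert (H2j : 0 < 2 ^ j) by (apply pow_lt; lra).
  destruct (M * 2 ^ j)%nat as [|m] eqn:Em; [lia|].
  pose proof (Zpin_single_excursion (Kren alpha L) (Kren_ge0 alpha L HL) m (fun _ => x) 0 0) as Hs.
  simpl (S 0 + m)%nat in Hs.
  apply ln_le_mono in Hs; [|apply Rmult_lt_0_compat; [apply Kren_gt0; auto; lia | apply exp_pos]].
  rewrite ln_mult, ln_exp in Hs by (try apply Kren_gt0; auto; try lia; apply exp_pos).
  assert (Hpos : 0 < INR (S m)) by (apply lt_0_INR; lia).
  apply Rmult_le_reg_l with (INR (S m)); auto.
  rewrite <- Rmult_assoc, Rinv_r, Rmult_1_l by lra.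
  assert (eps * 2 ^ j <= eps * INR (S m))
    by (rewrite HnR; apply Rmult_le_compat_l; [unfold eps; lra | nra]).
  lra.
Qed.
End NonnegativeFreeEnergy.

(** * Runs of the environment *)

Definition switch (u : nat -> R) (n : nat) : R := if Req_EM_T (u (S n)) (u n) then 0 else 1.

Lemma switch_ge0 u n : 0 <= switch u n.
Proof. unfold switch. destruct (Req_EM_T _ _); lra. Qed.

Fixpoint run_length (u : nat -> R) (s m : nat) : nat :=
  match m with
  | O => O
  | S O => 1%nat
  | S m' => if Req_EM_T (u (S (S s))) (u (S s)) then S (run_length u (S s) m') else 1%nat
  end.

Lemma run_length_S2 u s m : run_length u s (S (S m))
  = if Req_EM_T (u (S (S s))) (u (S s)) then S (run_length u (S s) (S m)) else 1%nat.
Proof. reflexivity. Qed.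

Lemma run_length_bounds m : forall u s, (1 <= m)%nat -> (1 <= run_length u s m <= m)%nat.
Proof.
  induction m as [|[|m] IH]; intros u s H; [lia | simpl; lia|].
  rewrite run_length_S2. destruct (Req_EM_T _ _); [|lia].
  specialize (IH u (S s) ltac:(lia)). lia.
Qed.

Lemma run_length_const m : forall u s i,
  (1 <= i <= run_length u s m)%nat -> u (s + i)%nat = u (S s).
Proof.
  induction m as [|[|m] IH]; intros u s i H; [simpl in H; lia| |].
  - simpl in H. replace i with 1%nat by lia. rewrite Nat.add_1_r. reflexivity.
  - rewrite run_length_S2 in H. destruct (Req_EM_T _ _) as [E|E];
      [|replace i with 1%nat by lia; rewrite Nat.add_1_r; reflexivity].
    destruct (Nat.eq_dec i 1) as [->|Hi]; [rewrite Nat.add_1_r; reflexivity|].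
    replace (s + i)%nat with (S s + (i - 1))%nat by lia.
    rewrite IH by lia. exact E.
Qed.

Lemma run_length_switch m : forall u s,
  (run_length u s m < m)%nat -> switch u (s + run_length u s m) = 1.
Proof.
  induction m as [|[|m] IH]; intros u s H; [simpl in H; lia | simpl in H; lia|].
  rewrite run_length_S2 in *. destruct (Req_EM_T _ _) as [E|E].
  - rewrite <- Nat.add_succ_comm. apply IH. lia.
  - rewrite Nat.add_1_r. unfold switch. destruct (Req_EM_T _ _); [contradiction | reflexivity].
Qed.

Definition switches (u : nat -> R) (s m : nat) : R := sumR (switch u) (seq (S s) (pred m)).

Lemma switches_ge0 u s m : 0 <= switches u s m.
Proof. apply sumR_ge0. intros; apply switch_ge0. Qed.

Lemma switches_suffix_le u s i m : (i <= m)%nat -> switches u (s + i) (m - i) <= switches u s m.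
Proof.
  intros H. unfold switches. destruct (Nat.eq_dec i m) as [->|Hne].
  - rewrite Nat.sub_diag. simpl. apply sumR_ge0; intros; apply switch_ge0.
  - replace (pred m) with (i + pred (m - i))%nat by lia. rewrite seq_app, sumR_app.
    rewrite <- Nat.add_succ_l.
    pose proof (sumR_ge0 (switch u) (seq (S s) i) ltac:(intros; apply switch_ge0)). lra.
Qed.

Lemma switches_const u s r :
  (forall i, (1 <= i <= r)%nat -> u (s + i)%nat = u (S s)) -> switches u s r = 0.
Proof.
  intros H. unfold switches. rewrite (sumR_ext_in _ (fun _ => 0)); [rewrite sumR_const; ring|].
  intros x Hx. apply in_seq in Hx. unfold switch.
  assert (E1 : u (S x) = u (S s)) by (replace (S x) with (s + (S x - s))%nat by lia; apply H; lia).
  assert (E2 : u x = u (S s)) by (replace x with (s + (x - s))%nat by lia; apply H; lia).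
  rewrite E1, E2. destruct (Req_EM_T _ _) as [|Hn]; [reflexivity | contradiction].
Qed.

Lemma switches_run u s m : (1 <= m)%nat -> (run_length u s m < m)%nat ->
  switches u s m = 1 + switches u (s + run_length u s m) (m - run_length u s m).
Proof.
  intros H1 H2. set (r := run_length u s m) in *.
  pose proof (run_length_bounds m u s H1). fold r in H.
  assert (Hc : switches u s r = 0) by (apply switches_const; intros; apply (run_length_const m); lia).
  unfold switches in *.
  replace (pred m) with (pred r + (1 + pred (m - r)))%nat by lia.
  rewrite !seq_app, !sumR_app, Hc.
  replace (S s + pred r)%nat with (s + r)%nat by lia.
  replace (s + r + 1)%nat with (S (s + r)) by lia.
  pose proof (run_length_switch m u s H2) as Hsw. fold r in Hsw.
  simpl. rewrite Hsw. ring.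
Qed.

Section RunDecomposition.
Variables (K : nat -> R) (Fh : R -> R).
Hypothesis K_ge0 : forall n, 0 <= K n.
Hypothesis K_le1 : forall n, K n <= 1.
Hypothesis K1_gt0 : 0 < K 1.
Hypothesis HF_ge0 : forall x, 0 <= Fh x.

Definition Fsum (u : nat -> R) (s m : nat) : R := sumR (fun n => Fh (u n)) (seq (S s) m).

Lemma Fsum_ge0 u s m : 0 <= Fsum u s m.
Proof. apply sumR_ge0. auto. Qed.

Lemma Fsum_split u s a b : Fsum u s (a + b) = Fsum u s a + Fsum u (s + a) b.
Proof. unfold Fsum. rewrite seq_app, sumR_app, <- Nat.add_succ_l. reflexivity. Qed.

Lemma Fsum_suffix_le u s i m : (i <= m)%nat -> Fsum u (s + i) (m - i) <= Fsum u s m.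
Proof.
  intros H. replace m with (i + (m - i))%nat at 2 by lia. rewrite Fsum_split.
  pose proof (Fsum_ge0 u s i). lra.
Qed.

Lemma Fsum_run u s m : (1 <= m)%nat ->
  Fsum u s m = INR (run_length u s m) * Fh (u (S s))
               + Fsum u (s + run_length u s m) (m - run_length u s m).
Proof.
  intros H. set (r := run_length u s m).
  pose proof (run_length_bounds m u s H). fold r in H0.
  replace m with (r + (m - r))%nat at 1 by lia. rewrite Fsum_split. f_equal.
  unfold Fsum. rewrite (sumR_ext_in _ (fun _ => Fh (u (S s)))), sumR_const, length_seq; [reflexivity|].
  intros x Hx. apply in_seq in Hx. replace x with (s + (x - s))%nat by lia.
  rewrite (run_length_const m) by (fold r; lia). reflexivity.
Qed.

Lemma Zpin_on_run u s m j : (1 <= m)%nat -> (j <= run_length u s m)%nat ->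
  Zpin K u 0 s j = Zpin K (fun _ => u (S s)) 0 0 j.
Proof. intros H Hj. apply Zpin_ext. intros i Hi. apply (run_length_const m). simpl. lia. Qed.

Lemma Zpin_ge_exp_Fsum (u : nat -> R) (eps E : R) : 0 <= E ->
  (forall i l, INR l * (Fh (u i) - eps) - E <= ln (Zpin K (fun _ => u i) 0 0 l)) ->
  forall m s, exp (Fsum u s m - eps * INR m - E * (1 + switches u s m)) <= Zpin K u 0 s m.
Proof.
  intros HE Hlow m. induction m as [m IH] using (well_founded_induction Wf_nat.lt_wf). intros s.
  destruct m as [|m'].
  - unfold Fsum, switches. simpl.
    apply Rle_trans with (exp 0); [apply exp_le_mono | rewrite exp_0]; lra.
  - set (m := S m') in *. set (r := run_length u s m).
    pose proof (run_length_bounds m u s ltac:(lia)) as Hr. fold r in Hr.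
    assert (Hrun : exp (INR r * (Fh (u (S s)) - eps) - E) <= Zpin K u 0 s r).
    { rewrite (Zpin_on_run u s m r) by (fold r; lia).
      rewrite <- exp_ln by (apply Zpin_gt0; auto). apply exp_le_mono, Hlow. }
    rewrite Fsum_run by lia. fold r.
    pose proof (switches_ge0 u s m).
    destruct (Nat.eq_dec r m) as [Erm|Erm].
    + rewrite Erm, Nat.sub_diag in *. unfold Fsum at 1. simpl seq. simpl sumR.
      eapply Rle_trans; [|apply Hrun]. apply exp_le_mono. nra.
    + rewrite switches_run by lia. fold r.
      replace (Zpin K u 0 s m) with (Zpin K u 0 s (r + (m - r))) by (f_equal; lia).
      eapply Rle_trans; [|apply Zpin_supermul; auto].
      pose proof (IH (m - r)%nat ltac:(lia) (s + r)%nat) as Hrest.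
      replace (exp _) with (exp (INR r * (Fh (u (S s)) - eps) - E)
        * exp (Fsum u (s + r) (m - r) - eps * INR (m - r) - E * (1 + switches u (s + r) (m - r)))).
      * apply Rmult_le_compat; auto; left; apply exp_pos.
      * rewrite <- exp_plus, minus_INR by lia. f_equal. ring.
Qed.

Hypothesis HZup : forall x j, Zpin K (fun _ => x) 0 0 j <= exp (INR j * Fh x).

Lemma Zcum_on_run u s m : (1 <= m)%nat ->
  Zcum K u 0 s (run_length u s m)
  <= (INR (run_length u s m) + 1) * exp (INR (run_length u s m) * Fh (u (S s))).
Proof.
  intros Hm. apply Zcum_le; auto.
  - rewrite <- exp_0. apply exp_le_mono, Rmult_le_pos; [apply pos_INR | auto].
  - intros j Hj. rewrite (Zpin_on_run u s m j) by lia.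
    eapply Rle_trans; [apply HZup|]. apply exp_le_mono, Rmult_le_compat_r; auto.
    apply le_INR; lia.
Qed.

(* The run's last renewal and the first renewal after it each take at most
   m + 1 positions, and the field at the latter contributes at most C. *)
Lemma Zpin_le_first_run u s m C D B :
  (1 <= m)%nat -> (run_length u s m < m)%nat ->
  (forall i, exp (u i) <= C) -> (INR m + 1) * (INR m + 1) * C <= exp D ->
  (forall i, (1 <= i <= m - run_length u s m)%nat ->
     Zpin K u 0 (s + run_length u s m + i) (m - run_length u s m - i) <= B) ->
  Zpin K u 0 s m <= exp (INR (run_length u s m) * Fh (u (S s))) * exp D * B.
Proof.
  intros Hm Hrm HC HDm HB.
  pose proof (Zcum_on_run u s m Hm) as Hcum.
  set (r := run_length u s m) in *. set (c := u (S s)) in *.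
  assert (HC0 : 0 < C) by (apply Rlt_le_trans with (exp (u 0%nat)); [apply exp_pos | auto]).
  destruct (m - r)%nat as [|n] eqn:En; [lia|].
  assert (HB0 : 0 <= B).
  { specialize (HB (S n) ltac:(lia)). pose proof (Zpin_ge0 K K_ge0 (S n - S n) u 0 (s + r + S n)). lra. }
  replace (Zpin K u 0 s m) with (Zpin K u 0 s (r + S n)) by (f_equal; lia).
  eapply Rle_trans; [apply Zpin_split_le; auto|].
  pose proof (Zfree_le K K_ge0 (S n) u (s + r) B C HC HB) as Hfree.
  pose proof (Zcum_ge0 K K_ge0 r u 0 s). pose proof (Zfree_ge0 K K_ge0 (S n) u (s + r)).
  assert (Hcount : (INR r + 1) * (INR (S n) * C) <= exp D).
  { eapply Rle_trans; [|apply HDm].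
    assert (INR r <= INR m) by (apply le_INR; lia).
    assert (INR (S n) <= INR m + 1) by (rewrite S_INR; apply Rplus_le_compat_r, le_INR; lia).
    pose proof (pos_INR r). pose proof (pos_INR (S n)).
    rewrite (Rmult_assoc (INR m + 1)).
    apply Rmult_le_compat; [lra | apply Rmult_le_pos | | apply Rmult_le_compat_r]; lra. }
  pose proof (exp_pos (INR r * Fh c)).
  apply Rle_trans with ((INR r + 1) * exp (INR r * Fh c) * (INR (S n) * C * B));
    [apply Rmult_le_compat; auto|].
  replace ((INR r + 1) * exp (INR r * Fh c) * (INR (S n) * C * B))
    with ((INR r + 1) * (INR (S n) * C) * (exp (INR r * Fh c) * B)) by ring.
  replace (exp (INR r * Fh c) * exp D * B) with (exp D * (exp (INR r * Fh c) * B)) by ring.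
  apply Rmult_le_compat_r; [apply Rmult_le_pos|]; lra.
Qed.

Lemma Zpin_le_exp_Fsum (u : nat -> R) (C D : R) (M : nat) :
  (forall i, exp (u i) <= C) -> 0 <= D -> (INR M + 1) * (INR M + 1) * C <= exp D ->
  forall m s, (m <= M)%nat -> Zpin K u 0 s m <= exp (Fsum u s m + D * (1 + switches u s m)).
Proof.
  intros HC HD HDM m. induction m as [m IH] using (well_founded_induction Wf_nat.lt_wf).
  intros s Hm.
  destruct m as [|m'].
  - unfold Fsum, switches. simpl.
    apply Rle_trans with (exp 0); [rewrite exp_0 | apply exp_le_mono]; lra.
  - set (m := S m') in *. set (r := run_length u s m).
    pose proof (run_length_bounds m u s ltac:(lia)) as Hr. fold r in Hr.
    pose proof (switches_ge0 u s m).
    rewrite Fsum_run by lia. fold r.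
    destruct (Nat.eq_dec r m) as [Erm|Erm].
    + rewrite (Zpin_on_run u s m m) by lia. rewrite Erm, Nat.sub_diag.
      unfold Fsum at 1. simpl seq. simpl sumR.
      eapply Rle_trans; [apply HZup|]. apply exp_le_mono.
      assert (0 <= D * (1 + switches u s m)) by (apply Rmult_le_pos; lra). lra.
    + rewrite switches_run by lia. fold r.
      eapply Rle_trans; [apply (Zpin_le_first_run u s m C D
        (exp (Fsum u (s + r) (m - r) + D * (1 + switches u (s + r) (m - r))))); eauto; try lia|].
      * eapply Rle_trans; [|apply HDM].
        assert (INR m <= INR M) by (apply le_INR; lia).
        assert (0 < exp (u 0%nat)) by apply exp_pos. pose proof (HC 0%nat). pose proof (pos_INR m).
        apply Rmult_le_compat_r; [lra|]. apply Rmult_le_compat; lra.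
      * intros i Hi. eapply Rle_trans; [apply IH; lia|]. apply exp_le_mono.
        pose proof (Fsum_suffix_le u (s + r) i (m - r) ltac:(lia)).
        pose proof (switches_suffix_le u (s + r) i (m - r) ltac:(lia)). fold r. nra.
      * fold r. rewrite <- !exp_plus. right. f_equal. ring.
Qed.
End RunDecomposition.

(** * The Markov environment *)

Section Chain.
Variable p : R.

Definition chain_E (b0 : bool) (n : nat) (G : list bool -> R) : R :=
  sumR (fun l => path_weight p b0 l * G l) (bool_lists n).

Lemma chain_E_S b0 n G : chain_E b0 (S n) G =
  Qtrans p b0 true * chain_E true n (fun l => G (true :: l))
  + Qtrans p b0 false * chain_E false n (fun l => G (false :: l)).
Proof.
  unfold chain_E. rewrite sumR_bool_lists_S, <- !sumR_scal.
  f_equal; apply sumR_ext; intros; simpl; ring.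
Qed.

Lemma chain_E_affine b0 n a b c G1 G2 :
  chain_E b0 n (fun l => a * G1 l + b * G2 l + c)
  = a * chain_E b0 n G1 + b * chain_E b0 n G2 + c * chain_E b0 n (fun _ => 1).
Proof. unfold chain_E. rewrite <- !sumR_scal, <- !sumR_plus. apply sumR_ext; intros; ring. Qed.

Lemma chain_E_plus b0 n G1 G2 : chain_E b0 n (fun l => G1 l + G2 l) = chain_E b0 n G1 + chain_E b0 n G2.
Proof. unfold chain_E. rewrite <- sumR_plus. apply sumR_ext; intros; ring. Qed.

Lemma chain_E_const n : forall b0 c, chain_E b0 n (fun _ => c) = c.
Proof.
  induction n; intros b0 c; [unfold chain_E; simpl; ring|].
  rewrite chain_E_S, !IHn. unfold Qtrans. destruct b0; simpl; ring.
Qed.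


Lemma chain_E_sum_stationary (g : R -> R) n :
  chain_E true n (fun l => sumR (fun k => g (omega_of true l k)) (seq 1 n))
  + chain_E false n (fun l => sumR (fun k => g (omega_of false l k)) (seq 1 n))
  = INR n * (g 1 + g (-1)).
Proof.
  induction n; [unfold chain_E; simpl; ring|].
  rewrite !chain_E_S.
  assert (E : forall b0 b,
    chain_E b n (fun l => sumR (fun k => g (omega_of b0 (b :: l) k)) (seq 1 (S n)))
    = g (spin b) + chain_E b n (fun l => sumR (fun k => g (omega_of b l k)) (seq 1 n))).
  { intros b0 b. rewrite <- (chain_E_const n b (g (spin b))) at 1. rewrite <- chain_E_plus.
    apply sumR_ext. intros l. simpl. rewrite sumR_seq_shift. reflexivity. }
  rewrite !E, S_INR. unfold Qtrans. simpl. lra.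
Qed.

Lemma chain_E_switches n : forall b0,
  chain_E b0 n (fun l => sumR (switch (omega_of b0 l)) (seq 0 n)) = INR n * p.
Proof.
  induction n; intros b0; [unfold chain_E; simpl; ring|].
  rewrite chain_E_S.
  assert (E : forall b,
    chain_E b n (fun l => sumR (switch (omega_of b0 (b :: l))) (seq 0 (S n)))
    = switch (omega_of b0 [b]) 0 + chain_E b n (fun l => sumR (switch (omega_of b l)) (seq 0 n))).
  { intros b. rewrite <- (chain_E_const n b (switch (omega_of b0 [b]) 0)) at 1.
    rewrite <- chain_E_plus. apply sumR_ext. intros l. simpl. rewrite sumR_seq_shift. reflexivity. }
  rewrite !E, !IHn, S_INR. unfold Qtrans, switch, omega_of, spin.
  destruct b0; simpl; repeat destruct (Req_EM_T _ _); lra.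
Qed.

Hypothesis Hp : 0 <= p <= 1.

Lemma path_weight_ge0 l : forall b0, 0 <= path_weight p b0 l.
Proof.
  induction l; intros; simpl; [lra|]. apply Rmult_le_pos; auto.
  unfold Qtrans. destruct (Bool.eqb b0 a); lra.
Qed.

Lemma chain_E_mono b0 n G1 G2 : (forall l, G1 l <= G2 l) -> chain_E b0 n G1 <= chain_E b0 n G2.
Proof.
  intros H. apply sumR_le; intros. apply Rmult_le_compat_l; auto. apply path_weight_ge0.
Qed.
End Chain.

Lemma MC_E_chain_E gamma N G : MC_E gamma N G =
  / 2 * chain_E (flip_prob gamma N) true N (fun l => G (omega_of true l)) +
  / 2 * chain_E (flip_prob gamma N) false N (fun l => G (omega_of false l)).
Proof.
  unfold MC_E, chain_E. simpl. rewrite <- !sumR_scal, Rplus_0_r.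
  f_equal; apply sumR_ext; intros; ring.
Qed.

Lemma MC_E_affine gamma N a b c G1 G2 :
  MC_E gamma N (fun w => a * G1 w + b * G2 w + c)
  = a * MC_E gamma N G1 + b * MC_E gamma N G2 + c.
Proof. rewrite !MC_E_chain_E, !chain_E_affine, !chain_E_const. field. Qed.

Lemma MC_E_mono gamma N G1 G2 : 0 <= flip_prob gamma N <= 1 ->
  (forall b0 l, G1 (omega_of b0 l) <= G2 (omega_of b0 l)) -> MC_E gamma N G1 <= MC_E gamma N G2.
Proof.
  intros Hp H. rewrite !MC_E_chain_E.
  pose proof (chain_E_mono _ Hp true N _ _ (fun l => H true l)).
  pose proof (chain_E_mono _ Hp false N _ _ (fun l => H false l)). lra.
Qed.

Lemma MC_E_sum gamma N (g : R -> R) :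
  MC_E gamma N (fun w => sumR (fun n => g (w n)) (seq 1 N)) = INR N * ((g 1 + g (-1)) / 2).
Proof.
  rewrite MC_E_chain_E, <- Rmult_plus_distr_l, (chain_E_sum_stationary _ g N). field.
Qed.

Lemma MC_E_switches gamma N :
  MC_E gamma N (fun w => sumR (switch w) (seq 0 N)) = INR N * flip_prob gamma N.
Proof. rewrite MC_E_chain_E, !chain_E_switches. field. Qed.

(** * The quenched free energy *)

Lemma ln_le_self y : 0 < y -> ln y <= y.
Proof. intros H. pose proof (exp_ineq1_le (ln y)). rewrite exp_ln in H0 by lra. lra. Qed.

Lemma Rpower_neg_small d t : 0 < d -> 0 < t ->
  exists N1, forall N, (N1 <= N)%nat -> Rpower (INR N) (- d) < t.
Proof.
  intros Hd Ht. destruct (INR_unbounded (exp (- ln t / d))) as [N1 HN1].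
  exists N1. intros N HN. assert (INR N1 <= INR N) by (apply le_INR; lia).
  pose proof (exp_pos (- ln t / d)).
  unfold Rpower. rewrite <- (exp_ln t) by lra. apply exp_increasing.
  assert (- ln t / d < ln (INR N)) by (rewrite <- (ln_exp (- ln t / d)); apply ln_increasing; lra).
  apply Rmult_lt_compat_l with (r := d) in H1; [|lra].
  replace (d * (- ln t / d)) with (- ln t) in H1 by (field; lra). lra.
Qed.

Lemma log_mul_Rpower_neg_small gamma a eta : 0 < gamma -> 0 <= a -> 0 < eta ->
  exists N1, forall N, (N1 <= N)%nat -> (a + 2 * ln (INR N + 1)) * Rpower (INR N) (- gamma) < eta.
Proof.
  intros Hg Ha He.
  assert (Hl2 : 0 < ln 2) by (pose proof ln_lt_2; lra).
  set (a' := a + 2 * ln 2). set (b := 4 / gamma).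
  assert (Hb : 0 < b) by (unfold b; apply Rdiv_lt_0_compat; lra).
  destruct (Rpower_neg_small gamma (eta / 2 / (a' + 1))) as [N1 H1]; auto.
  { apply Rdiv_lt_0_compat; unfold a'; lra. }
  destruct (Rpower_neg_small (gamma / 2) (eta / 2 / b)) as [N2 H2]; [lra | apply Rdiv_lt_0_compat; lra|].
  exists (Nat.max 1 (Nat.max N1 N2)). intros N HN.
  specialize (H1 N ltac:(lia)). specialize (H2 N ltac:(lia)).
  assert (Hx : 1 <= INR N) by (replace 1 with (INR 1) by reflexivity; apply le_INR; lia).
  set (x := INR N) in *. set (P := Rpower x (- gamma)) in *.
  assert (HP : 0 < P) by (unfold P, Rpower; apply exp_pos).
  assert (Hlnx1 : ln (x + 1) <= ln 2 + ln x) by (rewrite <- ln_mult by lra; apply ln_le_mono; lra).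
  assert (Hlnx : ln x <= 2 / gamma * Rpower x (gamma / 2)).
  { replace (ln x) with (2 / gamma * ln (Rpower x (gamma / 2))) by (rewrite ln_Rpower; field; lra).
    apply Rmult_le_compat_l; [apply Rlt_le, Rdiv_lt_0_compat; lra|].
    apply ln_le_self. unfold Rpower; apply exp_pos. }
  assert (HPh : Rpower x (gamma / 2) * P = Rpower x (- (gamma / 2))).
  { unfold P. rewrite <- Rpower_plus. f_equal. field. }
  assert (Hsplit : (a + 2 * ln (x + 1)) * P <= a' * P + b * Rpower x (- (gamma / 2))).
  { rewrite <- HPh. unfold a', b.
    apply Rle_trans with ((a + 2 * ln 2 + 2 * (2 / gamma * Rpower x (gamma / 2))) * P);
      [apply Rmult_le_compat_r; lra | right; field; lra]. }
  assert (a' * P <= eta / 2 * (a' / (a' + 1))).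
  { apply Rle_trans with (a' * (eta / 2 / (a' + 1)));
      [apply Rmult_le_compat_l; [unfold a' | ]; lra|].
    right. field. unfold a'; lra. }
  assert (b * Rpower x (- (gamma / 2)) < eta / 2).
  { apply Rlt_le_trans with (b * (eta / 2 / b)); [apply Rmult_lt_compat_l; lra | right; field; lra]. }
  assert (a' / (a' + 1) <= 1).
  { apply Rmult_le_reg_r with (a' + 1); [unfold a'; lra|].
    unfold Rdiv. rewrite Rmult_assoc, Rinv_l; unfold a'; lra. }
  nra.
Qed.

Lemma omega_of_spin b0 l n : omega_of b0 l n = 1 \/ omega_of b0 l n = -1.
Proof. unfold omega_of, spin. destruct (nth n (b0 :: l) false); auto. Qed.

Lemma switch_affine_le beta h (w : nat -> R) n : switch (fun n => beta * w n + h) n <= switch w n.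
Proof.
  unfold switch. destruct (Req_EM_T (w (S n)) (w n)) as [E|E].
  - rewrite E. destruct (Req_EM_T _ _) as [|H]; [lra | contradiction].
  - destruct (Req_EM_T _ _); lra.
Qed.

Lemma switches_affine_le beta h (w : nat -> R) N :
  switches (fun n => beta * w n + h) 0 N <= sumR (switch w) (seq 0 N).
Proof.
  unfold switches. destruct N; [simpl; lra|]. simpl pred. simpl (seq 0 (S N)). simpl sumR at 2.
  pose proof (switch_ge0 w 0).
  assert (sumR (switch (fun n => beta * w n + h)) (seq 1 N) <= sumR (switch w) (seq 1 N))
    by (apply sumR_le; intros; apply switch_affine_le).
  lra.
Qed.

Lemma flip_prob_bounds gamma N : 0 < gamma <= 1 -> (1 <= N)%nat ->
  / INR N <= flip_prob gamma N /\ 0 <= flip_prob gamma N <= 1.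
Proof.
  intros Hg HN. assert (HNr : 1 <= INR N) by (replace 1 with (INR 1) by reflexivity; apply le_INR; lia).
  unfold flip_prob. split; [|split].
  - rewrite <- (Rpower_1 (INR N)) at 1 by lra. rewrite <- Rpower_Ropp. apply Rle_Rpower; lra.
  - left. unfold Rpower. apply exp_pos.
  - rewrite <- (Rpower_O (INR N)) by lra. apply Rle_Rpower; lra.
Qed.

Section Quenched.
Variables (K : nat -> R) (Fh : R -> R) (beta h : R).
Hypothesis K_ge0 : forall n, 0 <= K n.
Hypothesis K_le1 : forall n, K n <= 1.
Hypothesis K1_gt0 : 0 < K 1.
Hypothesis HF : forall x, Un_cv (fun N => / INR N * ln (Zpin K (fun _ => x) 0 0 N)) (Fh x).
Hypothesis HF_ge0 : forall x, 0 <= Fh x.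

Let Fmean (w : nat -> R) (N : nat) : R := sumR (fun n => Fh (beta * w n + h)) (seq 1 N).
Let nswitch (w : nat -> R) (N : nat) : R := sumR (switch w) (seq 0 N).

Lemma ln_Zpf_le (w : nat -> R) (D : R) (N : nat) :
  (forall n, w n = 1 \/ w n = -1) -> 0 <= D ->
  (INR N + 1) * (INR N + 1) * exp (Rabs h + Rabs beta) <= exp D ->
  ln (Zpf K beta h w N) <= Fmean w N + D * (1 + nswitch w N).
Proof.
  intros Hw HD HDexp. rewrite Zpf_Zpin.
  set (u := fun n => beta * w n + h).
  assert (HC : forall i, exp (u i) <= exp (Rabs h + Rabs beta)).
  { intros i. apply exp_le_mono. unfold u. pose proof (Rle_abs h). pose proof (Rle_abs beta).
    pose proof (Rle_abs (- beta)). rewrite Rabs_Ropp in *. destruct (Hw i) as [-> | ->]; lra. }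
  pose proof (Zpin_le_exp_Fsum K Fh K_ge0 K_le1 HF_ge0 (Zpin_const_le_exp K Fh K_ge0 K1_gt0 HF)
                u _ D N HC HD HDexp N 0 (Nat.le_refl N)) as H.
  apply ln_le_mono in H; [|apply Zpin_gt0; auto]. rewrite ln_exp in H.
  assert (D * switches u 0 N <= D * nswitch w N)
    by (apply Rmult_le_compat_l; [|apply switches_affine_le]; auto).
  unfold Fmean. unfold Fsum, u in *. lra.
Qed.

Lemma ln_Zpf_ge (w : nat -> R) (eps E : R) (N : nat) :
  (forall n, w n = 1 \/ w n = -1) -> 0 <= E ->
  (forall l, INR l * (Fh (h + beta) - eps) - E <= ln (Zpin K (fun _ => h + beta) 0 0 l)) ->
  (forall l, INR l * (Fh (h - beta) - eps) - E <= ln (Zpin K (fun _ => h - beta) 0 0 l)) ->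
  Fmean w N - eps * INR N - E * (1 + nswitch w N) <= ln (Zpf K beta h w N).
Proof.
  intros Hw HE Hplus Hminus. rewrite Zpf_Zpin.
  set (u := fun n => beta * w n + h).
  assert (Hlow : forall i l, INR l * (Fh (u i) - eps) - E <= ln (Zpin K (fun _ => u i) 0 0 l)).
  { intros i l. unfold u. destruct (Hw i) as [-> | ->].
    - replace (beta * 1 + h) with (h + beta) by ring. apply Hplus.
    - replace (beta * -1 + h) with (h - beta) by ring. apply Hminus. }
  pose proof (Zpin_ge_exp_Fsum K Fh K_ge0 K1_gt0 u eps E HE Hlow N 0) as H.
  apply ln_le_mono in H; [|apply exp_pos]. rewrite ln_exp in H.
  assert (E * switches u 0 N <= E * nswitch w N)
    by (apply Rmult_le_compat_l; [|apply switches_affine_le]; auto).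
  unfold Fmean. unfold Fsum, u in *. lra.
Qed.

Let Fbar := (Fh (h + beta) + Fh (h - beta)) / 2.

Lemma MC_E_Fmean gamma N : MC_E gamma N (fun w => Fmean w N) = INR N * Fbar.
Proof.
  unfold Fmean, Fbar.
  rewrite (MC_E_sum gamma N (fun y => Fh (beta * y + h))).
  do 2 f_equal; f_equal; f_equal; ring.
Qed.

Lemma MC_E_ln_Zpf_bounds gamma N eps E D :
  (1 <= N)%nat -> 0 <= flip_prob gamma N <= 1 -> 0 <= E -> 0 <= D ->
  (INR N + 1) * (INR N + 1) * exp (Rabs h + Rabs beta) <= exp D ->
  (forall l, INR l * (Fh (h + beta) - eps) - E <= ln (Zpin K (fun _ => h + beta) 0 0 l)) ->
  (forall l, INR l * (Fh (h - beta) - eps) - E <= ln (Zpin K (fun _ => h - beta) 0 0 l)) ->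
  let m := MC_E gamma N (fun w => / INR N * ln (Zpf K beta h w N)) in
  Fbar - eps - E * (/ INR N + flip_prob gamma N) <= m
  /\ m <= Fbar + D * (/ INR N + flip_prob gamma N).
Proof.
  intros HN Hp HE HD HDexp Hplus Hminus m.
  assert (HNr : 0 < INR N) by (apply lt_0_INR; lia).
  assert (Hinv : 0 < / INR N) by (apply Rinv_0_lt_compat; lra).
  pose proof (MC_E_Fmean gamma N) as HA. pose proof (MC_E_switches gamma N) as HS.
  split.
  - eapply Rle_trans; [|apply (MC_E_mono gamma N (fun w =>
      / INR N * Fmean w N + (- E / INR N) * nswitch w N + (- eps - E / INR N))); auto].
    + rewrite MC_E_affine, HA. unfold nswitch. rewrite HS. right. field. lra.
    + intros b0 l. pose proof (ln_Zpf_ge _ eps E N (omega_of_spin b0 l) HE Hplus Hminus).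
      apply Rmult_le_reg_l with (INR N); [lra|].
      replace (INR N * (/ INR N * ln (Zpf K beta h (omega_of b0 l) N))) with
        (ln (Zpf K beta h (omega_of b0 l) N)) by (field; lra).
      apply Rle_trans with (2 := H). right. field. lra.
  - eapply Rle_trans; [apply (MC_E_mono gamma N _ (fun w =>
      / INR N * Fmean w N + (D / INR N) * nswitch w N + D / INR N)); auto|].
    + intros b0 l. pose proof (ln_Zpf_le _ D N (omega_of_spin b0 l) HD HDexp).
      apply Rmult_le_reg_l with (INR N); [lra|].
      replace (INR N * (/ INR N * ln (Zpf K beta h (omega_of b0 l) N))) with
        (ln (Zpf K beta h (omega_of b0 l) N)) by (field; lra).
      apply Rle_trans with (1 := H). right. field. lra.
    + rewrite MC_E_affine, HA. unfold nswitch. rewrite HS. right. field. lra.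
Qed.

Lemma MC_E_ln_Zpf_cv gamma : 0 < gamma <= 1 ->
  Un_cv (fun N => MC_E gamma N (fun w => / INR N * ln (Zpf K beta h w N))) Fbar.
Proof.
  intros Hg eta Heta.
  destruct (ln_Zpin_const_ge K Fh K_ge0 K1_gt0 HF (h + beta) (eta / 4) ltac:(lra)) as [E1 [HE1 H1]].
  destruct (ln_Zpin_const_ge K Fh K_ge0 K1_gt0 HF (h - beta) (eta / 4) ltac:(lra)) as [E2 [HE2 H2]].
  pose proof (Rmax_l E1 E2). pose proof (Rmax_r E1 E2). set (E := Rmax E1 E2) in *.
  set (Cb := Rabs h + Rabs beta).
  assert (HCb : 0 <= Cb) by (pose proof (Rabs_pos h); pose proof (Rabs_pos beta); unfold Cb; lra).
  destruct (log_mul_Rpower_neg_small gamma (E + Cb) (eta / 8) ltac:(lra) ltac:(lra) ltac:(lra))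
    as [N1 HN1].
  exists (Nat.max N1 1). intros N HN. specialize (HN1 N ltac:(lia)).
  pose proof (flip_prob_bounds gamma N Hg ltac:(lia)) as [Hinv Hp].
  set (D := 2 * ln (INR N + 1) + Cb).
  assert (HN1r : 1 <= INR N) by (replace 1 with (INR 1) by reflexivity; apply le_INR; lia).
  assert (Hln : 0 <= ln (INR N + 1)) by (rewrite <- ln_1; apply ln_le_mono; lra).
  assert (HDexp : (INR N + 1) * (INR N + 1) * exp Cb <= exp D).
  { unfold D. replace (2 * ln (INR N + 1)) with (ln (INR N + 1) + ln (INR N + 1)) by ring.
    rewrite !exp_plus, exp_ln by lra. lra. }
  destruct (MC_E_ln_Zpf_bounds gamma N (eta / 4) E D ltac:(lia) ltac:(lra) ltac:(lra) ltac:(unfold D; lra)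
              HDexp ltac:(intros l; pose proof (H1 l); lra) ltac:(intros l; pose proof (H2 l); lra))
    as [Hlo Hhi].
  fold (flip_prob gamma N) in HN1.
  assert (E * flip_prob gamma N <= (E + Cb + 2 * ln (INR N + 1)) * flip_prob gamma N)
    by (apply Rmult_le_compat_r; lra).
  assert (D * flip_prob gamma N <= (E + Cb + 2 * ln (INR N + 1)) * flip_prob gamma N)
    by (apply Rmult_le_compat_r; unfold D; lra).
  assert (E * / INR N <= E * flip_prob gamma N) by (apply Rmult_le_compat_l; lra).
  assert (D * / INR N <= D * flip_prob gamma N) by (apply Rmult_le_compat_l; unfold D; lra).
  unfold Rdist. apply Rabs_def1; lra.
Qed.
End Quenched.

Lemma F_beta_h_mean Fh beta h : 0 <= beta -> (forall x, x <= 0 -> Fh x = 0) ->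
  F_beta_h Fh beta h = (Fh (h + beta) + Fh (h - beta)) / 2.
Proof.
  intros Hb Fz. unfold F_beta_h.
  destruct (Rle_dec h (- beta)); [rewrite !Fz by lra; field|].
  destruct (Rlt_dec h beta); [rewrite (Fz (h - beta)) by lra; field | reflexivity].
Qed.

Theorem mainTheorem4 (gamma alpha : R) (L : nat -> R) (Fh : R -> R) (beta h : R) :
  0 < gamma < 1 ->
  0 <= alpha ->
  (forall n : nat, (1 <= n)%nat -> 0 < L n) ->
  slowly_varying L ->
  infinite_sum (fun n => Kren alpha L (S n)) 1 ->
  (forall x : R, Un_cv (fun N => / INR N * ln (Zhom (Kren alpha L) x N)) (Fh x)) ->
  0 <= beta ->
  Un_cv (fun N => MC_E gamma N
                    (fun omega => / INR N * ln (Zpf (Kren alpha L) beta h omega N)))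
        (F_beta_h Fh beta h).
Proof.
  intros Hg _ HL Hsv Hsum HF Hb.
  pose proof (Kren_ge0 alpha L HL) as K_ge0.
  pose proof (Kren_le1 alpha L HL Hsum) as K_le1.
  assert (K1_gt0 : 0 < Kren alpha L 1) by (rewrite Kren_1; apply HL; lia).
  assert (HF' : forall x, Un_cv (fun N => / INR N * ln (Zpin (Kren alpha L) (fun _ => x) 0 0 N)) (Fh x)).
  { intros x. apply (Un_cv_ext (fun N => / INR N * ln (Zhom (Kren alpha L) x N))); [|apply HF].
    intros N. rewrite Zhom_Zpin. reflexivity. }
  pose proof (F_ge0 alpha L HL Hsv Fh HF') as HF0.
  assert (Fz : forall x, x <= 0 -> Fh x = 0).
  { intros x Hx. pose proof (HF0 x).
    pose proof (F_le0 _ Fh K_ge0 K1_gt0 HF' x (Ktail_Kren_ge0 alpha L HL Hsum) Hx). lra. }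
  rewrite F_beta_h_mean by auto.
  apply MC_E_ln_Zpf_cv; auto. lra.
Qed.
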